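(* Let $k \in \mathbb{N}$. Every linear $k$-DCFG is equivalent to (i.e. generates the same language as) some $k$-DCFG $G = \langle N, \Sigma, P, S\rangle$ all of whose rules have one of the following forms, where $A, B \in N$ and $u \in \Theta$: (1) $A \to u\cdot B$ or $A \to B \cdot u$, with $|u| \leq 1$ and $u \neq \epsilon$; (2) $A \to B \odot_j u$, with $|u| \leq 1$; (3) $A \to u$, with $|u| \leq 1$.
   Context: Fix a finite alphabet $\Sigma$; $\Sigma^*$ is the set of words over $\Sigma$ and $\epsilon$ the empty word. $\Theta_k$ is the set of tuples $(u_0,\ldots,u_k)$ with $u_i\in\Sigma^*$, and $\Theta=\bigcup_{k\in\mathbb{N}}\Theta_k$; the rank of $(u_0,\ldots,u_k)$ is $k$, and its length $|u|$ is the sum of the lengths of its components. Rank-$0$ tuples are identified with words; in particular $\epsilon$ also denotes the rank-$0$ tuple $(\epsilon)$. Concatenation $\cdot:\Theta_i\times\Theta_j\to\Theta_{i+j}$ is $(x_0,\ldots,x_i)\cdot(y_0,\ldots,y_j)=(x_0,\ldots,x_{i-1},x_iy_0,y_1,\ldots,y_j)$, and for $1\le l\le i$ intercalation $\odot_l:\Theta_i\times\Theta_j\to\Theta_{i+j-1}$ is $(x_0,\ldots,x_i)\odot_l(y_0,\ldots,y_j)=(x_0,\ldots,x_{l-2},x_{l-1}y_0,y_1,\ldots,y_{j-1},y_jx_l,x_{l+1},\ldots,x_i)$. Let $N$ be a finite set of nonterminals disjoint from $\Sigma$ with a rank function $\mathrm{rk}:N\to\mathbb{N}$. The set of $k$-correct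 terms $\mathrm{Tm}_k(N,\Sigma)$ and their ranks are defined inductively: every tuple in $\Theta_j$ with $j\le k$ is a term of rank $j$, and every nonterminal $A$ with $\mathrm{rk}(A)\le k$ is a term of rank $\mathrm{rk}(A)$; if $\alpha,\beta$ are terms with $\mathrm{rk}\,\alpha+\mathrm{rk}\,\beta\le k$ then $(\alpha\cdot\beta)$ is a term of rank $\mathrm{rk}\,\alpha+\mathrm{rk}\,\beta$; if $1\le j\le k$, $\mathrm{rk}\,\alpha\ge j$ and $\mathrm{rk}\,\alpha+\mathrm{rk}\,\beta\le k+1$ then $(\alpha\odot_j\beta)$ is a term of rank $\mathrm{rk}\,\alpha+\mathrm{rk}\,\beta-1$. A ground term is one containing no nonterminals; its value $\nu(\alpha)\in\Theta$ is obtained by interpreting $\cdot$ and $\odot_j$ as the operations above. A context $C[x]$ is a term with one leaf occurrence of a variable $x$ of some rank; $C[\beta]$ is the result of substituting a term $\beta$ of the same rank for $x$. A $k$-displacement context-free grammar ($k$-DCFG) is $G=\langle N,\Sigma,P,S\rangle$ where $S\in N$ has rank $0$ and $P$ is a finite set of rules $A\to\alpha$ with $A\in N$, $\alpha\in\mathrm{Tm}_k(N,\Sigma)$ and $\mathrm{rk}(A)=\mathrm{rk}(\alpha)$. Standing assumption: all tuples occurring as leaves of right-hand sides of rules have length at most $1$. Derivability $\vdash_G$ is the smallest reflexive transitive relation between nonterminals and terms such that $(B\to\beta)\in P$ and $A\vdash_G C[B]$ imply $A\vdash_G C[\beta]$ for any context $C$. $L_G(A)=\{\nu(\alpha)\mid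 A\vdash_G\alpha,\ \alpha \text{ ground}\}$ and $L(G)=L_G(S)$. Two grammars are equivalent if they generate the same language. A term is linear if it contains at most one occurrence of a nonterminal; a grammar is linear if the right-hand sides of all its rules are linear. All right-hand sides in the claim are required to be $k$-correct terms of the same rank as the left-hand side. *)

From Stdlib Require List.
From mathcomp Require Import all_boot.
Set Implicit Arguments. Unset Strict Implicit. Unset Printing Implicit Defensive.

Section DCFG.
Variable Sigma : finType.

(* A word is a seq Sigma; a tuple (u_0,...,u_k) is the list [:: u_0; ...; u_k]
   (well-formed iff nonempty). *)
Definition word := seq Sigma.
Definition tup := seq word.

Definition tup_wf (u : tup) : bool := 0 < size u.
Definition trank (u : tup) : nat := (size u).-1.
Definition tlen (u : tup) : nat := sumn (map size u).
Definition teps : tup := [:: [::]].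

(* concatenation (x_0..x_i).(y_0..y_j) = (x_0..x_{i-1}, x_i y_0, y_1..y_j) *)
Definition tcat (x y : tup) : tup :=
  take (size x).-1 x ++ (last [::] x ++ head [::] y) :: behead y.

(* intercalation x (.)_l y = (x_0..x_{l-1}) . y . (x_l..x_i), which unfolds to
   (x_0..x_{l-2}, x_{l-1} y_0, y_1..y_{j-1}, y_j x_l, x_{l+1}..x_i) *)
Definition tintc (l : nat) (x y : tup) : tup :=
  tcat (tcat (take l x) y) (drop l x).

Variable N : finType.
Variable rk : N -> nat.

Inductive term : Type :=
| Tup of tup
| NT of N
| Cat of term & term
| Intc of nat & term & term.

Fixpoint rank (t : term) : nat :=
  match t with
  | Tup u => trank u
  | NT A => rk A
  | Cat a b => rank a + rank b
  | Intc _ a b => rank a + rank b - 1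
  end.

Fixpoint correct (k : nat) (t : term) : bool :=
  match t with
  | Tup u => tup_wf u && (trank u <= k)
  | NT A => rk A <= k
  | Cat a b => [&& correct k a, correct k b & rank a + rank b <= k]
  | Intc j a b => [&& correct k a, correct k b, 1 <= j <= k, j <= rank a
                    & rank a + rank b <= k.+1]
  end.

Fixpoint eval (t : term) : option tup :=
  match t with
  | Tup u => Some u
  | NT _ => None
  | Cat a b => match eval a, eval b with
               | Some x, Some y => Some (tcat x y) | _, _ => None end
  | Intc j a b => match eval a, eval b with
               | Some x, Some y => Some (tintc j x y) | _, _ => None end
  end.

Fixpoint nnt (t : term) : nat :=
  match t with
  | Tup _ => 0
  | NT _ => 1
  | Cat a b => nnt a + nnt b
  | Intc _ a b => nnt a + nnt b
  end.

Fixpoint leaves_short (t : term) : bool :=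
  match t with
  | Tup u => tlen u <= 1
  | NT _ => true
  | Cat a b => leaves_short a && leaves_short b
  | Intc _ a b => leaves_short a && leaves_short b
  end.

Variable P : seq (N * term).

Inductive step : term -> term -> Prop :=
| step_rule B beta : List.In (B, beta) P -> step (NT B) beta
| step_catl a a' b : step a a' -> step (Cat a b) (Cat a' b)
| step_catr a b b' : step b b' -> step (Cat a b) (Cat a b')
| step_intl j a a' b : step a a' -> step (Intc j a b) (Intc j a' b)
| step_intr j a b b' : step b b' -> step (Intc j a b) (Intc j a b').

Inductive derives (A : N) : term -> Prop :=
| der_refl : derives A (NT A)
| der_step t t' : derives A t -> step t t' -> derives A t'.

End DCFG.
Arguments Tup {Sigma N}.
Arguments NT {Sigma N}.
Arguments Cat {Sigma N}.
Arguments Intc {Sigma N}.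
Arguments teps {Sigma}.

Record dcfg (Sigma : finType) := Dcfg {
  nt : finType;
  nrk : nt -> nat;
  rules : seq (nt * term Sigma nt);
  start : nt }.

Definition is_kdcfg (Sigma : finType) (k : nat) (G : dcfg Sigma) : Prop :=
  nrk (start G) = 0 /\
  forall r, List.In r (rules G) ->
    [/\ correct (@nrk Sigma G) k r.2, rank (@nrk Sigma G) r.2 = nrk r.1
      & leaves_short r.2].

Definition linear_dcfg (Sigma : finType) (G : dcfg Sigma) : Prop :=
  forall r, List.In r (rules G) -> nnt r.2 <= 1.

Definition language (Sigma : finType) (G : dcfg Sigma) (w : tup Sigma) : Prop :=
  exists t, derives (rules G) (start G) t /\ eval t = Some w.

Definition normal_rule (Sigma : finType) (N : finType)
  (r : N * term Sigma N) : Prop :=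
  (exists B u, (r.2 = Cat (Tup u) (NT B) \/ r.2 = Cat (NT B) (Tup u))
               /\ tlen u <= 1 /\ u <> teps)
  \/ (exists B j u, r.2 = Intc j (NT B) (Tup u) /\ tlen u <= 1)
  \/ (exists u, r.2 = Tup u /\ tlen u <= 1).

From Stdlib Require List.
From Stdlib Require Import Relation_Operators Operators_Properties.
From mathcomp Require Import all_boot zify.
Set Implicit Arguments. Unset Strict Implicit. Unset Printing Implicit Defensive.

(* A linear rule [A -> t] is flattened into a template: the word spelled by [t],
   with separators at component boundaries and a hole for each component of the
   nonterminal [B] of [t].  The template is peeled one normal-form operation at
   a time: a letter or separator at either end is split off by concatenation;
   inside, a separator next to a letter or separator, a letter after a hole, or
   the empty word between two adjacent holes is split off by intercalation.
   Each template of the resulting chain gets a fresh nonterminal.  Every step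
   decreases [2 #letters + #separators + 2 #adjacent holes], and the two steps
   creating a separator are only used once every separator lies between two
   holes, so they never raise the rank above that of [B].  A chain ends in a
   ground word of length at most one or in the bare holes of [B], i.e. a unit
   rule [A -> B]; unit rules are eliminated by giving [A] the non-unit rules of
   every nonterminal it reaches by unit rules. *)

Section Generation.
Variables (Sigma N : finType) (P : seq (N * term Sigma N)).
Notation tup := (tup Sigma).
Notation term := (term Sigma N).

Fixpoint sem (g : N -> tup -> Prop) (t : term) (w : tup) : Prop :=
  match t with
  | Tup u => w = u
  | NT C => g C w
  | Cat a b => exists x y, [/\ sem g a x, sem g b y & w = tcat x y]
  | Intc j a b => exists x y, [/\ sem g a x, sem g b y & w = tintc j x y]
  end.

Fixpoint gen_upto (n : nat) (A : N) (w : tup) : Prop :=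
  if n is n'.+1 then exists2 b, List.In (A, b) P & sem (gen_upto n') b w
  else False.

Definition gen (A : N) (w : tup) : Prop := exists n, gen_upto n A w.

Lemma sem_mono (g g' : N -> tup -> Prop) :
  (forall C x, g C x -> g' C x) -> forall t w, sem g t w -> sem g' t w.
Proof.
move=> gg'; elim=> [u|C|a IHa b IHb|j a IHa b IHb] w //=; first exact: gg'.
  by case=> [x [y [ax bx ->]]]; exists x, y; split; [exact: IHa|exact: IHb|].
by case=> [x [y [ax bx ->]]]; exists x, y; split; [exact: IHa|exact: IHb|].
Qed.

Lemma gen_upto_mono n m A w : n <= m -> gen_upto n A w -> gen_upto m A w.
Proof.
elim: n m A w => [//|n IH] [//|m] A w /= le_nm [b Ab bw].
by exists b => //; apply: sem_mono bw => C x; apply: IH.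
Qed.

Lemma sem_gen t w : sem gen t w -> exists n, sem (gen_upto n) t w.
Proof.
have lift n m t' w' : n <= m -> sem (gen_upto n) t' w' -> sem (gen_upto m) t' w'.
  by move=> le_nm; apply: sem_mono => C x; apply: gen_upto_mono.
elim: t w => [u|C|a IHa b IHb|j a IHa b IHb] w //=; first by move=> ->; exists 0.
- case=> x [y [/IHa [n1 ax] /IHb [n2 by_] ->]]; exists (maxn n1 n2), x, y.
  by split; [apply: lift ax; lia|apply: lift by_; lia|].
- case=> x [y [/IHa [n1 ax] /IHb [n2 by_] ->]]; exists (maxn n1 n2), x, y.
  by split; [apply: lift ax; lia|apply: lift by_; lia|].
Qed.

Lemma gen_rule A b w : List.In (A, b) P -> sem gen b w -> gen A w.
Proof. by move=> Ab /sem_gen [n bw]; exists n.+1, b. Qed.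

Lemma sem_step t t' w : step P t t' -> sem gen t' w -> sem gen t w.
Proof.
move=> st; elim: st w => {t t'} [B b Bb|a a' b _ IH|a b b' _ IH|j a a' b _ IH|j a b b' _ IH]
  w /=; first exact: gen_rule.
all: by case=> x [y [ax bx ->]]; exists x, y; split=> //; apply: IH.
Qed.

Lemma eval_sem g t w : eval t = Some w -> sem g t w.
Proof.
elim: t w => [u|C|a IHa b IHb|j a IHa b IHb] w //=; first by case=> ->.
all: case Ea: (eval a) => [x|//]; case Eb: (eval b) => [y|//] [<-].
all: by exists x, y; split; [exact: IHa|exact: IHb|].
Qed.

Lemma derives_sem_gen A t w : derives P A t -> sem gen t w -> gen A w.
Proof. by move=> d; elim: d w => // t1 t2 _ IH st w /(sem_step st); apply: IH. Qed.

Notation steps := (clos_refl_trans term (step P)).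
Arguments rt_step {A R x y}.
Arguments rt_refl {A R x}.
Arguments rt_trans {A R x y z}.
Arguments clos_rt_rt1n {A R x y}.

Lemma steps_congr (f : term -> term) t t' :
  (forall s s', step P s s' -> step P (f s) (f s')) -> steps t t' -> steps (f t) (f t').
Proof.
move=> f_step; elim=> [s s' /f_step|s|s1 s2 s3 _ IH12 _ IH23]; first exact: rt_step.
  exact: rt_refl.
exact: rt_trans IH12 IH23.
Qed.

Lemma derives_steps A t t' : derives P A t -> steps t t' -> derives P A t'.
Proof.
move=> d st; elim: (clos_rt_rt1n st) d => // s1 s2 s3 st12 _ IH d.
by apply: IH; apply: der_step d st12.
Qed.

Lemma sem_steps t w :
  sem (fun C x => exists2 t', steps (NT C) t' & eval t' = Some x) t w ->
  exists2 t', steps t t' & eval t' = Some w.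
Proof.
elim: t w => [u|C|a IHa b IHb|j a IHa b IHb] w //=.
  by move=> ->; exists (Tup u); first exact: rt_refl.
- case=> x [y [/IHa [ta aa' ta_x] /IHb [tb bb' tb_y] ->]].
  exists (Cat ta tb); last by rewrite /= ta_x tb_y.
  apply: (@rt_trans _ _ _ (Cat ta b)).
    exact: (steps_congr (f := Cat^~ b) (fun s s' => step_catl b) aa').
  exact: (steps_congr (f := Cat ta) (step_catr ta) bb').
- case=> x [y [/IHa [ta aa' ta_x] /IHb [tb bb' tb_y] ->]].
  exists (Intc j ta tb); last by rewrite /= ta_x tb_y.
  apply: (@rt_trans _ _ _ (Intc j ta b)).
    exact: (steps_congr (f := Intc j^~ b) (fun s s' => step_intl j b) aa').
  exact: (steps_congr (f := Intc j ta) (step_intr j ta) bb').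
Qed.

Lemma gen_upto_steps n A w :
  gen_upto n A w -> exists2 t, steps (NT A) t & eval t = Some w.
Proof.
elim: n A w => [//|n IH] A w /= [b Ab /(sem_mono IH) /sem_steps [t bt tw]].
by exists t => //; apply: rt_trans bt; apply/rt_step/step_rule.
Qed.

Lemma language_gen A w : (exists t, derives P A t /\ eval t = Some w) <-> gen A w.
Proof.
split; first by case=> t [At tw]; apply: derives_sem_gen At _; apply: eval_sem.
case=> n /gen_upto_steps [t At tw]; exists t; split=> //.
exact: derives_steps (der_refl _ _) At.
Qed.

End Generation.

Section TupleOps.
Variable Sigma : finType.
Notation tup := (tup Sigma).

Lemma tcat_eps (y : tup) : y != [::] -> tcat teps y = y.
Proof. by case: y. Qed.

Lemma tcat_cons (x : word Sigma) (xs y : tup) :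
  xs != [::] -> tcat (x :: xs) y = x :: tcat xs y.
Proof. by case: xs. Qed.

Lemma tcat_sep (x z : tup) : x != [::] -> tcat x ([::] :: z) = x ++ z.
Proof.
case/lastP: x => [//|x l] _; rewrite /tcat size_rcons /= -cats1 take_size_cat //.
by rewrite last_cat cats0 -catA.
Qed.

Lemma size_tcat (x y : tup) : 0 < size x -> 0 < size y ->
  size (tcat x y) = size x + size y - 1.
Proof.
move=> x0 y0; rewrite /tcat size_cat /= size_behead size_take.
by rewrite ifT; lia.
Qed.

Lemma size_tintc j (x y : tup) : 0 < j < size x -> 0 < size y ->
  size (tintc j x y) = size x + size y - 2.
Proof.
move=> /andP [j0 jx] y0; rewrite /tintc.
have size_take_j : size (take j x) = j by rewrite size_take jx.
by rewrite !size_tcat ?size_tcat ?size_take_j ?size_drop; lia.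
Qed.

End TupleOps.

Section Tokens.
Variable Sigma : finType.
Notation tup := (tup Sigma).

(* A tuple is spelled out as a word with explicit component separators; a
   [Hole] is a slot that [fill] replaces by the next component of the tuple
   plugged in.  A nonterminal of rank [r] thus becomes [holes r]. *)
Inductive tok := Ltr of Sigma | Sep | Hole.

Definition is_ltr (c : tok) := if c is Ltr _ then true else false.
Definition is_sep (c : tok) := if c is Sep then true else false.
Definition is_hole (c : tok) := if c is Hole then true else false.

Definition nltr (s : seq tok) := count is_ltr s.
Definition nsep (s : seq tok) := count is_sep s.
Definition nhole (s : seq tok) := count is_hole s.

Lemma nltr_cat s t : nltr (s ++ t) = nltr s + nltr t. Proof. exact: count_cat. Qed.
Lemma nsep_cat s t : nsep (s ++ t) = nsep s + nsep t. Proof. exact: count_cat. Qed.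
Lemma nhole_cat s t : nhole (s ++ t) = nhole s + nhole t. Proof. exact: count_cat. Qed.

Lemma nsep_ltrs (w : word Sigma) : nsep (map Ltr w) = 0. Proof. by elim: w. Qed.
Lemma nhole_ltrs (w : word Sigma) : nhole (map Ltr w) = 0. Proof. by elim: w. Qed.

Fixpoint decode (s : seq tok) : tup :=
  match s with
  | [::] => teps
  | Ltr a :: s' => let d := decode s' in (a :: head [::] d) :: behead d
  | Sep :: s' => [::] :: decode s'
  | Hole :: s' => decode s'
  end.

Lemma decode_neq0 s : decode s != [::].
Proof. by elim: s => [|[a| |] s IH]. Qed.

Lemma size_decode s : size (decode s) = (nsep s).+1.
Proof.
elim: s => [|[a| |] s IH] //=; last by rewrite IH.
by case: (decode s) IH (decode_neq0 s) => [|d0 dr] //= ->.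
Qed.

Lemma trank_decode s : trank (decode s) = nsep s.
Proof. by rewrite /trank size_decode. Qed.

Lemma tup_wf_decode s : tup_wf (decode s).
Proof. by rewrite /tup_wf size_decode. Qed.

Lemma tlen_decode s : tlen (decode s) = nltr s.
Proof.
rewrite /tlen; elim: s => [|[a| |] s IH] //=.
by case: (decode s) (decode_neq0 s) IH => [|d0 dr] //= _ <-.
Qed.

Lemma decode_cat s t : decode (s ++ t) = tcat (decode s) (decode t).
Proof.
elim: s => [|[a| |] s IH] /=; first by rewrite tcat_eps // decode_neq0.
- rewrite IH; case: (decode s) (decode_neq0 s) => [//|d0 [|d1 dr]] _; first by [].
  by rewrite /= !(@tcat_cons _ _ (d1 :: dr)).
- by rewrite IH tcat_cons // decode_neq0.
- exact: IH.
Qed.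

Lemma decode_sep s t : decode (s ++ Sep :: t) = decode s ++ decode t.
Proof. by rewrite decode_cat /= tcat_sep // decode_neq0. Qed.

Lemma tintc_decode s1 s2 t :
  tintc (nsep s1).+1 (decode (s1 ++ Sep :: s2)) (decode t) = decode (s1 ++ t ++ s2).
Proof.
rewrite decode_sep /tintc -size_decode take_size_cat // drop_size_cat //.
by rewrite catA !decode_cat.
Qed.

Lemma decode_ltrs (w : word Sigma) : decode (map Ltr w) = [:: w].
Proof. by elim: w => [|a w IH] //=; rewrite IH. Qed.

Fixpoint fill (T : seq tok) (x : tup) : seq tok :=
  match T with
  | [::] => [::]
  | Hole :: T' => map Ltr (head [::] x) ++ fill T' (behead x)
  | c :: T' => c :: fill T' x
  end.

Lemma fill_cat p q x : fill (p ++ q) x = fill p x ++ fill q (drop (nhole p) x).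
Proof.
elim: p x => [|[a| |] p IH] x /=; rewrite ?drop0 // ?IH //.
by rewrite -catA add1n -drop1 drop_drop addnC.
Qed.

Lemma fill_holefree T x : nhole T = 0 -> fill T x = T.
Proof. by elim: T => [|[a| |] T IH] //= T0; rewrite IH. Qed.

Lemma nsep_fill T x : nsep (fill T x) = nsep T.
Proof.
elim: T x => [|[a| |] T IH] x //=; rewrite ?IH //.
by rewrite nsep_cat nsep_ltrs IH.
Qed.

Lemma decode_fill_catl T1 T2 x : nhole T1 = 0 ->
  decode (fill (T1 ++ T2) x) = tcat (decode T1) (decode (fill T2 x)).
Proof. by move=> T1_0; rewrite fill_cat T1_0 drop0 fill_holefree // decode_cat. Qed.

Lemma decode_fill_catr T1 T2 x : nhole T2 = 0 ->
  decode (fill (T1 ++ T2) x) = tcat (decode (fill T1 x)) (decode T2).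
Proof. by move=> T2_0; rewrite fill_cat (fill_holefree _ T2_0) decode_cat. Qed.

Lemma decode_fill_intc_in p T q x : nhole p = 0 -> nhole q = 0 ->
  decode (fill (p ++ T ++ q) x)
  = tintc (nsep p).+1 (decode (p ++ Sep :: q)) (decode (fill T x)).
Proof.
move=> p0 q0; rewrite tintc_decode !fill_cat p0 drop0.
by rewrite (fill_holefree _ p0) (fill_holefree _ q0).
Qed.

Lemma decode_fill_intc_out p T q x : nhole T = 0 ->
  decode (fill (p ++ T ++ q) x)
  = tintc (nsep p).+1 (decode (fill (p ++ Sep :: q) x)) (decode T).
Proof.
move=> T0; rewrite fill_cat (fill_cat T) (fill_holefree _ T0) T0 drop0 fill_cat.
by rewrite -(nsep_fill p x) tintc_decode.
Qed.

Fixpoint holes (r : nat) : seq tok :=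
  if r is r'.+1 then Hole :: Sep :: holes r' else [:: Hole].

Lemma nsep_holes r : nsep (holes r) = r.
Proof. by elim: r => //= r ->. Qed.

Lemma nhole_holes r : nhole (holes r) = r.+1.
Proof. by elim: r => //= r ->. Qed.

Lemma decode_fill_holes r (x : tup) : size x = r.+1 -> decode (fill (holes r) x) = x.
Proof.
elim: r x => [|r IH] [|x0 x] //=; first by case: x => //= _; rewrite cats0 decode_ltrs.
by case=> x_r; rewrite decode_sep decode_ltrs IH.
Qed.

Fixpoint encode (u : tup) : seq tok :=
  match u with
  | [::] => [::]
  | [:: w] => map Ltr w
  | w :: ws => map Ltr w ++ Sep :: encode ws
  end.

Lemma encode_spec u : u != [::] ->
  [/\ decode (encode u) = u, nsep (encode u) = trank u & nhole (encode u) = 0].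
Proof.
elim: u => [//|w [|w1 ws] IH] _; first by rewrite /= decode_ltrs nsep_ltrs nhole_ltrs.
have [dec_ws nsep_ws nhole_ws] := IH isT.
rewrite [encode _]/= decode_sep decode_ltrs dec_ws nsep_cat nhole_cat /=.
by rewrite nsep_ltrs nhole_ltrs nsep_ws nhole_ws /trank.
Qed.

Fixpoint repl_sep (j : nat) (s t : seq tok) : seq tok :=
  match s with
  | [::] => [::]
  | Sep :: s' => if j == 1 then t ++ s' else Sep :: repl_sep j.-1 s' t
  | c :: s' => c :: repl_sep j s' t
  end.

Lemma repl_sepP j s t : 1 <= j <= nsep s ->
  exists p q, [/\ s = p ++ Sep :: q, nsep p = j.-1 & repl_sep j s t = p ++ t ++ q].
Proof.
elim: s j => [|[a| |] s IH] j /=; first by rewrite /nsep /=; lia.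
- by move=> /IH [p [q [-> nsep_p ->]]]; exists (Ltr a :: p), q.
- case: (eqVneq j 1) => [-> _|j_neq1 j_s]; first by exists [::], s.
  have /IH [p [q [-> nsep_p ->]]] : 1 <= j.-1 <= nsep s by move: j_s; rewrite /nsep /=; lia.
  by exists (Sep :: p), q; split=> //; rewrite /nsep /= -/(nsep p) nsep_p; lia.
- by move=> /IH [p [q [-> nsep_p ->]]]; exists (Hole :: p), q.
Qed.

End Tokens.
Arguments Sep {Sigma}.
Arguments Hole {Sigma}.

Section Ranks.
Variables (Sigma N : finType) (rk : N -> nat) (k : nat).

Lemma correct_rank (t : term Sigma N) : correct rk k t -> rank rk t <= k.
Proof.
case: t => [u|B|a b|j a b] //=; first by case/andP.
  by case/and3P.
by case/and5P=> _ _ _ _; lia.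
Qed.

Lemma sem_size (g : N -> tup Sigma -> Prop) t w :
  (forall C x, g C x -> size x = (rk C).+1) ->
  correct rk k t -> sem g t w -> size w = (rank rk t).+1.
Proof.
move=> g_size; elim: t w => [u|B|a IHa b IHb|j a IHa b IHb] w /=.
- by case/andP=> wf _ ->; rewrite /trank; case: u wf.
- by move=> _ /g_size.
- case/and3P=> ca cb _ [x [y [/(IHa _ ca) sx /(IHb _ cb) sy ->]]].
  by rewrite size_tcat ?sx ?sy //; lia.
- case/and5P=> ca cb /andP [j1 _] ja _ [x [y [/(IHa _ ca) sx /(IHb _ cb) sy ->]]].
  by rewrite size_tintc ?sx ?sy //; lia.
Qed.

End Ranks.

Section Templates.
Variables (Sigma N : finType) (rk : N -> nat).
Notation tup := (tup Sigma).
Notation term := (term Sigma N).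
Notation tok := (tok Sigma).

Fixpoint nt_of (t : term) : option N :=
  match t with
  | Tup _ => None
  | NT B => Some B
  | Cat a b | Intc _ a b => if nt_of a is Some B then Some B else nt_of b
  end.

Fixpoint template (t : term) : seq tok :=
  match t with
  | Tup u => encode u
  | NT B => holes Sigma (rk B)
  | Cat a b => template a ++ template b
  | Intc j a b => repl_sep j (template a) (template b)
  end.

Definition nholes (h : option N) := if h is Some B then (rk B).+1 else 0.

Lemma nt_of_ground t : nnt t = 0 -> nt_of t = None.
Proof.
elim: t => [u|B|a IHa b IHb|j a IHa b IHb] //= /eqP.
all: by rewrite addn_eq0 => /andP [/eqP/IHa -> /eqP].
Qed.

Lemma nt_of_right (a b : term) : nnt b = 0 ->
  (if nt_of a is Some B then Some B else nt_of b) = nt_of a :> option N.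
Proof. by move/nt_of_ground ->; case: (nt_of a). Qed.

Lemma rk_nt_of k t B : correct rk k t -> nt_of t = Some B -> rk B <= k.
Proof.
elim: t B => [u|C|a IHa b IHb|j a IHa b IHb] B //=; first by move=> ? [<-].
  by case/and3P=> ca cb _; case E: (nt_of a) => [C|]; [move=> [<-]; apply: IHa|apply: IHb].
by case/and5P=> ca cb _ _ _; case E: (nt_of a) => [C|]; [move=> [<-]; apply: IHa|apply: IHb].
Qed.

Lemma template_nsep k t : correct rk k t -> nsep (template t) = rank rk t.
Proof.
elim: t => [u|B|a IHa b IHb|j a IHa b IHb] /=.
- by case/andP=> wf _; have /encode_spec [] : u != [::] by case: u wf.
- by rewrite nsep_holes.
- by case/and3P=> /IHa <- /IHb <- _; rewrite nsep_cat.
- case/and5P=> /IHa nsep_a /IHb <- /andP [j1 _] ja _.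
  have /(repl_sepP (template b)) [p [q [Ta nsep_p ->]]] : 1 <= j <= nsep (template a).
    by rewrite nsep_a j1.
  by move: nsep_a; rewrite Ta !nsep_cat /= => <-; lia.
Qed.

Lemma template_intc k j a b : correct rk k (Intc j a b) ->
  exists p q, [/\ template a = p ++ Sep :: q, j = (nsep p).+1
                & template (Intc j a b) = p ++ template b ++ q].
Proof.
case/and5P=> ca _ /andP [j1 _] ja _.
have /(repl_sepP (template b)) [p [q [Ta nsep_p Tab]]] : 1 <= j <= nsep (template a).
  by rewrite (template_nsep ca) j1.
by exists p, q; split=> //; lia.
Qed.

Lemma nholes_nt_of2 a b : nnt a + nnt b <= 1 ->
  nholes (if nt_of a is Some B then Some B else nt_of b) = nholes (nt_of a) + nholes (nt_of b).
Proof.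
have [/nt_of_ground -> //|a1 lin] := posnP (nnt a).
by rewrite (@nt_of_ground b) ?addn0; [case: (nt_of a)|lia].
Qed.

Lemma template_nhole k t : correct rk k t -> nnt t <= 1 ->
  nhole (template t) = nholes (nt_of t).
Proof.
elim: t => [u|B|a IHa b IHb|j a IHa b IHb] /=.
- by case/andP=> wf _ _; have /encode_spec [] : u != [::] by case: u wf.
- by rewrite nhole_holes.
- case/and3P=> ca cb _ lin.
  by rewrite nhole_cat IHa ?IHb ?nholes_nt_of2 //; lia.
- move=> cab lin; have [p [q [Ta _ Tab]]] := template_intc cab.
  change (nhole (template (Intc j a b)) = nholes (nt_of (Intc j a b))); rewrite Tab /=.
  case/and5P: cab => ca cb _ _ _; have := IHa ca; rewrite Ta !nhole_cat /= => nhole_a.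
  by rewrite nholes_nt_of2 // -nhole_a ?IHb; lia.
Qed.

Definition tmpl_sem (g : N -> tup -> Prop) (h : option N) (T : seq tok) (w : tup) :=
  exists2 x, (if h is Some B then g B x /\ size x = (rk B).+1 else x = [::])
           & w = decode (fill T x).

Lemma tmpl_sem_mono g g' h T w :
  (forall C x, g C x -> g' C x) -> tmpl_sem g h T w -> tmpl_sem g' h T w.
Proof.
by move=> gg' [x hx ->]; exists x => //; case: h hx => [B [/gg' gx sx]|].
Qed.

Lemma tmpl_sem_ground g T w : nhole T = 0 -> tmpl_sem g None T w <-> w = decode T.
Proof.
move=> T0; rewrite /tmpl_sem; split=> [[x -> ->]|->]; first by rewrite fill_holefree.
by exists [::]; rewrite ?fill_holefree.
Qed.

Lemma tmpl_sem_holes g B w : (forall x, g B x -> size x = (rk B).+1) ->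
  tmpl_sem g (Some B) (holes Sigma (rk B)) w <-> g B w.
Proof.
move=> g_size; split=> [[x [gx sx] ->]|gw]; first by rewrite decode_fill_holes.
by exists w; [split; last exact: g_size|rewrite decode_fill_holes // g_size].
Qed.

Lemma tmpl_sem_map g h T T' (f : tup -> tup) :
  (forall x, decode (fill T x) = f (decode (fill T' x))) ->
  forall w, tmpl_sem g h T w <-> exists2 y, tmpl_sem g h T' y & w = f y.
Proof.
move=> Tf w; split=> [[x hx ->]|[y [x hx ->] ->]]; last by exists x; rewrite ?Tf.
by exists (decode (fill T' x)); [exists x|rewrite Tf].
Qed.

Lemma sem_ground k g t : correct rk k t -> nnt t = 0 ->
  forall w, sem g t w <-> w = decode (template t).
Proof.
elim: t => [u|B|a IHa b IHb|j a IHa b IHb] //=.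
- by case/andP=> wf _ _ w; have /encode_spec [-> _ _] : u != [::] by case: u wf.
- case/and3P=> ca cb _ /eqP; rewrite addn_eq0 => /andP [/eqP a0 /eqP b0].
  move=> w; rewrite decode_cat; split=> [[x [y [/(IHa ca a0) -> /(IHb cb b0) -> ->]]]|->] //.
  by exists (decode (template a)), (decode (template b)); split;
    [apply/(IHa ca a0)|apply/(IHb cb b0)|].
- move=> cab /eqP; rewrite addn_eq0 => /andP [/eqP a0 /eqP b0].
  have [p [q [Ta -> Tab]]] := template_intc cab; case/and5P: cab => ca cb _ _ _.
  change (repl_sep _ _ _) with (template (Intc (nsep p).+1 a b)).
  move=> w; rewrite Tab -tintc_decode -Ta.
  split=> [[x [y [/(IHa ca a0) -> /(IHb cb b0) -> ->]]]|->] //.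
  by exists (decode (template a)), (decode (template b)); split;
    [apply/(IHa ca a0)|apply/(IHb cb b0)|].
Qed.

Section Semantics.
Variables (k : nat) (g : N -> tup -> Prop).
Hypothesis g_size : forall C x, g C x -> size x = (rk C).+1.

Lemma sem_ground_left a b (f : tup -> tup -> tup) w :
  correct rk k a -> nnt a = 0 -> correct rk k b -> nnt b <= 1 ->
  (forall y, sem g b y <-> tmpl_sem g (nt_of b) (template b) y) ->
  (exists x y, [/\ sem g a x, sem g b y & w = f x y])
  <-> exists2 y, tmpl_sem g (nt_of b) (template b) y & w = f (decode (template a)) y.
Proof.
move=> ca a0 cb b1 IHb; split=> [[x [y [/(sem_ground g ca a0) -> /IHb by_ ->]]]|[y /IHb by_ ->]].
  by exists y.
by exists (decode (template a)), y; split=> //; apply/(sem_ground g ca a0).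
Qed.

Lemma sem_ground_right a b (f : tup -> tup -> tup) w :
  correct rk k a -> nnt a <= 1 -> correct rk k b -> nnt b = 0 ->
  (forall x, sem g a x <-> tmpl_sem g (nt_of a) (template a) x) ->
  (exists x y, [/\ sem g a x, sem g b y & w = f x y])
  <-> exists2 x, tmpl_sem g (nt_of a) (template a) x & w = f x (decode (template b)).
Proof.
move=> ca a1 cb b0 IHa; split=> [[x [y [/IHa ax /(sem_ground g cb b0) -> ->]]]|[x /IHa ax ->]].
  by exists x.
by exists x, (decode (template b)); split=> //; apply/(sem_ground g cb b0).
Qed.

Lemma sem_template t : correct rk k t -> nnt t <= 1 ->
  forall w, sem g t w <-> tmpl_sem g (nt_of t) (template t) w.
Proof.
elim: t => [u|B|a IHa b IHb|j a IHa b IHb].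
- case/andP=> wf _ _ w; have /encode_spec [dec_u _ u0] : u != [::] by case: u wf.
  by rewrite tmpl_sem_ground // dec_u.
- by move=> _ _ w; rewrite tmpl_sem_holes // => x; apply: g_size.
- case/and3P=> ca cb _; rewrite [nnt _]/= => lin w /=.
  have [a0|a1] := posnP (nnt a).
  + have b1 : nnt b <= 1 by lia.
    rewrite (nt_of_ground a0) (sem_ground_left (@tcat _) w ca a0 cb b1 (IHb cb b1)).
    symmetry; apply: tmpl_sem_map => x; apply: decode_fill_catl.
    by rewrite (template_nhole ca) ?(nt_of_ground a0) ?a0.
  + have [a1' b0] : nnt a <= 1 /\ nnt b = 0 by lia.
    rewrite nt_of_right // (sem_ground_right (@tcat _) w ca a1' cb b0 (IHa ca a1')).
    symmetry; apply: tmpl_sem_map => x; apply: decode_fill_catr.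
    by rewrite (template_nhole cb) ?(nt_of_ground b0) ?b0.
- move=> cab; rewrite [nnt _]/= => lin w; have [p [q [Ta -> Tab]]] := template_intc cab.
  rewrite Tab /=; case/and5P: cab => ca cb _ _ _.
  have [a0|a1] := posnP (nnt a).
  + have b1 : nnt b <= 1 by lia.
    rewrite (nt_of_ground a0) (sem_ground_left (tintc (nsep p).+1) w ca a0 cb b1 (IHb cb b1)).
    have := template_nhole ca; rewrite (nt_of_ground a0) Ta nhole_cat /= => /(_ _)/eqP.
    rewrite addn_eq0 a0 => /(_ isT)/andP [/eqP p0 /eqP q0].
    by symmetry; apply: tmpl_sem_map => x; rewrite decode_fill_intc_in.
  + have [a1' b0] : nnt a <= 1 /\ nnt b = 0 by lia.
    rewrite nt_of_right // (sem_ground_right (tintc (nsep p).+1) w ca a1' cb b0 (IHa ca a1')).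
    rewrite Ta; symmetry; apply: tmpl_sem_map => x; apply: decode_fill_intc_out.
    by rewrite (template_nhole cb) ?(nt_of_ground b0) ?b0.
Qed.

End Semantics.

End Templates.

Section AdjacentPairs.
Variable A : Type.
Implicit Types (r : rel A) (s p q : seq A).

Definition shift_pair (a : A) (x : seq A * A * A * seq A) :=
  let: (p, b, c, q) := x in (a :: p, b, c, q).

Fixpoint find_pair r s : option (seq A * A * A * seq A) :=
  if s is a :: s' then
    if s' is b :: q then
      if r a b then Some ([::], a, b, q) else omap (shift_pair a) (find_pair r s')
    else None
  else None.

Lemma find_pair_cons2 r a b q : find_pair r [:: a, b & q]
  = if r a b then Some ([::], a, b, q) else omap (shift_pair a) (find_pair r (b :: q)).
Proof. by []. Qed.

Arguments find_pair : simpl never.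

Definition nopair r : rel A := fun a b => ~~ r a b.

Lemma find_pairP r s p a b q :
  find_pair r s = Some (p, a, b, q) -> s = p ++ a :: b :: q /\ r a b.
Proof.
elim: s p => [|a0 [|b0 s] IH] p //; rewrite find_pair_cons2.
case: ifP => [rab [<- <- <- <-] //|_].
case E: (find_pair r (b0 :: s)) => [[[[p' a'] b'] q']|] //= [<- Ea Eb Eq].
by subst; have [-> ->] := IH _ E.
Qed.

Lemma find_pair_none r s : find_pair r s = None -> sorted (nopair r) s.
Proof.
elim: s => [|a [|b s] IH] //; rewrite find_pair_cons2 /=; case: ifP => // nrab.
case E: (find_pair r (b :: s)) => //= _.
by apply/andP; split; [rewrite /nopair nrab|exact: IH E].
Qed.

Lemma sorted_nopair_split r p a b q : sorted (nopair r) (p ++ a :: b :: q) -> ~~ r a b.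
Proof.
case: p => [/andP [] //|a0 p].
by rewrite /= cat_path => /and3P [_ _ /andP []].
Qed.

End AdjacentPairs.

Section Peeling.
Variable Sigma : finType.
Notation tup := (tup Sigma).
Notation tok := (tok Sigma).

Definition sep_pair (c d : tok) := (is_sep c && ~~ is_hole d) || (is_ltr c && is_sep d).
Definition hole_pair (c d : tok) := is_hole c && ~~ is_sep d.

(* Without separator pairs every separator follows a hole; charging it to that
   hole leaves the last hole and the first of two adjacent holes uncharged. *)
Lemma nsep_hole_bound c T : path (nopair sep_pair) c T -> last c T = Hole ->
  nsep (c :: T) + ~~ is_sep c + ~~ sorted (nopair hole_pair) (c :: T)
  <= nhole (c :: T).
Proof.
elim: T c => [|d T IH] c; first by case: c.
rewrite /= => /andP [ncd pdT] lT; have {pdT lT IH} := IH _ pdT lT.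
rewrite /= /nsep /nhole /= -/(nsep _) -/(nhole _).
move: ncd; rewrite /nopair /sep_pair /hole_pair.
by case: c => [a| |]; case: d => [b| |] //=; lia.
Qed.

Lemma holes_shape c T :
  path (nopair sep_pair) c T -> path (nopair hole_pair) c T -> last c T = Hole ->
  (c = Hole -> c :: T = holes Sigma (nsep T)) /\ (c = Sep -> T = holes Sigma (nsep T)).
Proof.
elim: T c => [|d T IH] c; first by case: c.
rewrite /= => /andP [nscd psT] /andP [nhcd phT] lT.
have {psT phT lT IH} [IH1 IH2] := IH _ psT phT lT.
split=> Ec; move: nscd nhcd; rewrite Ec /nopair /sep_pair /hole_pair.
- by case: d IH1 IH2 => [b| |] //= _ <-.
- by case: d IH1 IH2 => [b| |] //= <-.
Qed.

Lemma is_hole_eq (c : tok) : is_hole c -> c = Hole.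
Proof. by case: c. Qed.

Inductive piece := PLeft of tok | PRight of tok | PMid of nat & seq tok.

Definition piece_op (o : piece) (y : tup) : tup :=
  match o with
  | PLeft c => tcat (decode [:: c]) y
  | PRight c => tcat y (decode [:: c])
  | PMid j v => tintc j y (decode v)
  end.

Definition mid (p v q : seq tok) := (PMid (nsep p).+1 v, p ++ Sep :: q).

Definition peel (T : seq tok) : option (piece * seq tok) :=
  if T is c :: T' then
    if ~~ is_hole c then Some (PLeft c, T') else
    if ~~ is_hole (last c T') then Some (PRight (last c T'), belast c T') else
    if find_pair sep_pair T is Some (p, c1, d1, q) then Some (mid p [:: c1; d1] q) else
    if find_pair hole_pair T is Some (p, _, d1, q) then
      Some (if d1 is Ltr a then mid (rcons p Hole) [:: Ltr a] q
            else mid (rcons p Hole) [::] (Hole :: q))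
    else None
  else None.

Variant peel_spec (T : seq tok) : option (piece * seq tok) -> Prop :=
| PeelLeft c T' of T = c :: T' & ~~ is_hole c : peel_spec T (Some (PLeft c, T'))
| PeelRight c T' of T = rcons T' c & ~~ is_hole c : peel_spec T (Some (PRight c, T'))
| PeelSepPair p c d q of T = p ++ [:: c; d] ++ q & sep_pair c d :
    peel_spec T (Some (mid p [:: c; d] q))
| PeelHoleHole p q of T = rcons p Hole ++ [::] ++ Hole :: q & (nsep T).+2 <= nhole T :
    peel_spec T (Some (mid (rcons p Hole) [::] (Hole :: q)))
| PeelHoleLtr p a q of T = rcons p Hole ++ [:: Ltr a] ++ q & (nsep T).+2 <= nhole T :
    peel_spec T (Some (mid (rcons p Hole) [:: Ltr a] q))
| PeelStuck of T = [::] \/ T = holes Sigma (nsep T) : peel_spec T None.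

Lemma peelP T : peel_spec T (peel T).
Proof.
case: T => [|c T]; first by constructor; left.
rewrite /peel; case: ifP => [hc|/negbFE hc]; first by constructor.
case: ifP => [hl|/negbFE hl]; first by apply: PeelRight; rewrite -?lastI.
case Es: find_pair => [[[[p c1] d1] q]|].
  by have [ET sp] := find_pairP Es; constructor.
have nosep := find_pair_none Es.
case Eh: find_pair => [[[[p c1] d1] q]|]; last first.
  constructor; right.
  have nsep_cT : nsep (c :: T) = nsep T by rewrite /nsep /= (is_hole_eq hc).
  rewrite nsep_cT; apply: (holes_shape nosep (find_pair_none Eh) (is_hole_eq hl)).1.
  exact: is_hole_eq.
have [ET hp] := find_pairP Eh.
have bound : (nsep (c :: T)).+2 <= nhole (c :: T).
  have pair_c1d1 : ~~ sorted (nopair hole_pair) (c :: T).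
    by apply: contraL hp; rewrite ET; apply: sorted_nopair_split.
  have := nsep_hole_bound nosep (is_hole_eq hl); rewrite pair_c1d1 (is_hole_eq hc).
  by rewrite /nsep /nhole /=; lia.
clear Eh; case: c1 hp ET => // d1_ok ET.
by case: d1 d1_ok ET => [a| |] // _ ET; constructor; rewrite // -cats1 -catA.
Qed.

Lemma peel_op T o T' : peel T = Some (o, T') ->
  forall x, decode (fill T x) = piece_op o (decode (fill T' x)).
Proof.
case: peelP => // [c T0 -> hc|c T0 -> hc|p c d q -> sp|p q -> _|p a q -> _] [<- <-] x.
- by rewrite -cat1s decode_fill_catl //; case: c hc.
- by rewrite -cats1 decode_fill_catr //; case: c hc.
- by rewrite decode_fill_intc_out //; case: c d sp => [?| |] [?| |].
- by rewrite decode_fill_intc_out.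
- by rewrite decode_fill_intc_out.
Qed.

Lemma peel_nhole T o T' : peel T = Some (o, T') -> nhole T' = nhole T.
Proof.
case: peelP => // [c T0 -> hc|c T0 -> hc|p c d q -> sp|p q -> _|p a q -> _] [_ <-].
- by case: c hc.
- by rewrite -cats1 nhole_cat (_ : nhole [:: c] = 0) ?addn0 //; case: c hc.
- by rewrite !nhole_cat; case: c d sp => [?| |] [?| |].
- by rewrite !nhole_cat.
- by rewrite !nhole_cat.
Qed.

Lemma peel_nsep T o T' : peel T = Some (o, T') -> nsep T' <= nsep T \/ nsep T' < nhole T.
Proof.
case: peelP => // [c T0 -> hc|c T0 -> hc|p c d q -> sp|p q ET bound|p a q ET bound] [_ <-].
- by left; rewrite /nsep /= leq_addl.
- by left; rewrite -cats1 nsep_cat leq_addr.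
- by left; rewrite !nsep_cat /=; case: c d sp => [?| |] [?| |] //=; lia.
- by right; move: bound; rewrite ET !nsep_cat /=; lia.
- by right; move: bound; rewrite ET !nsep_cat /=; lia.
Qed.

Fixpoint nadj_holes (T : seq tok) : nat :=
  if T is c :: T' then nadj_holes T' + (is_hole c && is_hole (head Sep T')) else 0.

Lemma nadj_holes_cat p s : nadj_holes (p ++ s)
  = nadj_holes p + nadj_holes s + (is_hole (last Sep p) && is_hole (head Sep s)).
Proof.
elim: p => [|c p IH] /=; first by rewrite addn0.
by rewrite IH; case: p IH => [|d p] _ /=; lia.
Qed.

Definition tmpl_weight (T : seq tok) := 2 * nltr T + nsep T + 2 * nadj_holes T.

Lemma peel_weight T o T' : peel T = Some (o, T') -> tmpl_weight T' < tmpl_weight T.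
Proof.
rewrite /tmpl_weight.
case: peelP => // [c T0 -> hc|c T0 -> hc|p c d q -> sp|p q -> _|p a q -> _] [_ <-].
- by case: c hc => [a| |] //= _; rewrite /nltr /nsep /=; lia.
- rewrite -cats1 nadj_holes_cat nltr_cat nsep_cat.
  by case: c hc => [a| |] //= _; rewrite /nltr /nsep /=; lia.
- rewrite !nadj_holes_cat !nltr_cat !nsep_cat.
  by case: c d sp => [?| |] [?| |] //= _; rewrite /nltr /nsep /=; lia.
- rewrite !nadj_holes_cat !nltr_cat !nsep_cat last_rcons /=; lia.
- rewrite !nadj_holes_cat !nltr_cat !nsep_cat last_rcons /=; lia.
Qed.

Inductive move := Emit of tup | Peel of piece & seq tok | Stop.

Definition next_move (T : seq tok) : move :=
  if (nhole T == 0) && (nltr T <= 1) then Emit (decode T)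
  else if peel T is Some (o, T') then Peel o T' else Stop.

Lemma next_move_emit T u :
  next_move T = Emit u -> [/\ u = decode T, nhole T = 0 & nltr T <= 1].
Proof.
rewrite /next_move; case: ifP => [/andP [/eqP T0 T1] [<-] //|_].
by case: (peel T) => [[]|].
Qed.

Lemma next_move_peel T o T' : next_move T = Peel o T' -> peel T = Some (o, T').
Proof.
rewrite /next_move; case: ifP => // _.
by case: (peel T) => [[o1 T1] [<- <-]|].
Qed.

Lemma next_move_stop T : next_move T = Stop -> T = holes Sigma (nsep T).
Proof.
rewrite /next_move; case: ifP => // cond.
case E: (peel T) => [[o T']|] // _; move: E.
by case: peelP cond => // -[->|].
Qed.

Definition piece_term (N : finType) (o : piece) (Y : term Sigma N) : term Sigma N :=
  match o with
  | PLeft c => Cat (Tup (decode [:: c])) Y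
  | PRight c => Cat Y (Tup (decode [:: c]))
  | PMid j v => Intc j Y (Tup (decode v))
  end.

Lemma sem_piece_term (N : finType) (g : N -> tup -> Prop) o Y w :
  sem g (piece_term o (NT Y)) w <-> exists2 y, g Y y & w = piece_op o y.
Proof.
case: o => [c|c|j v] /=; split.
- by case=> x [y [-> gy ->]]; exists y.
- by case=> y gy ->; exists (decode [:: c]), y.
- by case=> x [y [gx -> ->]]; exists x.
- by case=> y gy ->; exists y, (decode [:: c]).
- by case=> x [y [gx -> ->]]; exists x.
- by case=> y gy ->; exists y, (decode v).
Qed.

End Peeling.

Section NormalRules.
Variables (Sigma N : finType) (rk : N -> nat) (k : nat).
Notation tok := (tok Sigma).

Definition wf_normal_rule (r : N * term Sigma N) :=
  [/\ correct rk k r.2, rank rk r.2 = rk r.1, leaves_short r.2 & normal_rule r].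

Lemma emit_rule_wf X T :
  nhole T = 0 -> nltr T <= 1 -> nsep T <= k -> rk X = nsep T ->
  wf_normal_rule (X, Tup (decode T)).
Proof.
move=> _ T1 Tk XT; rewrite /wf_normal_rule /= tup_wf_decode trank_decode tlen_decode XT.
by split=> //; right; right; exists (decode T); rewrite tlen_decode.
Qed.

Lemma piece_rule_wf T o T' X Y :
  peel T = Some (o, T') -> nsep T <= k -> nsep T' <= k ->
  rk X = nsep T -> rk Y = nsep T' -> wf_normal_rule (X, piece_term o (NT Y)).
Proof.
have mid_wf p v q : nltr v <= 1 -> nsep (p ++ v ++ q) <= k -> nsep (p ++ Sep :: q) <= k ->
    rk X = nsep (p ++ v ++ q) -> rk Y = nsep (p ++ Sep :: q) ->
    wf_normal_rule (X, piece_term (PMid (nsep p).+1 v) (NT Y)).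
  rewrite !nsep_cat /= => v1 Tk T'k XT YT'.
  rewrite /wf_normal_rule /= tup_wf_decode trank_decode tlen_decode XT YT' v1.
  split; [apply/and5P; split=> //; lia|lia|by []|].
  by right; left; exists Y, (nsep p).+1, (decode v); rewrite tlen_decode.
have end_wf (c : tok) (T0 : seq tok) (left : bool) : ~~ is_hole c ->
    nsep T0 + nsep [:: c] <= k -> nsep T0 <= k ->
    rk X = nsep T0 + nsep [:: c] -> rk Y = nsep T0 ->
    wf_normal_rule (X, if left then Cat (Tup (decode [:: c])) (NT Y)
                else Cat (NT Y) (Tup (decode [:: c]))).
  move=> hc Tk T0k XT YT0.
  have [l1 eps] : nltr [:: c] <= 1 /\ decode [:: c] <> teps by case: (c) hc.
  have := tup_wf_decode [:: c]; have := trank_decode [:: c]; have := tlen_decode [:: c].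
  move: eps; generalize (decode [:: c]) => u eps lu ru wu.
  case: left; rewrite /wf_normal_rule /= wu ru lu XT YT0 ?andTb ?andbT;
    (split; [apply/and3P; split=> //; lia|lia|by []|left; exists Y, u]);
    by split; [left + right|rewrite lu].
case: peelP => // [c T0 -> hc|c T0 -> hc|p c d q -> sp|p q -> _|p a q -> _] [<- <-].
- by rewrite -cat1s nsep_cat addnC; apply: (end_wf c T0 true).
- by rewrite -cats1 nsep_cat; apply: (end_wf c T0 false).
- by apply: mid_wf; case: c d sp => [?| |] [?| |].
- exact: mid_wf.
- exact: mid_wf.
Qed.

End NormalRules.

Lemma In_mem (T : eqType) (x : T) (s : seq T) : x \in s -> List.In x s.
Proof. by elim: s => [//|y s IH]; rewrite in_cons => /orP [/eqP ->|/IH]; [left|right]. Qed.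

Lemma In_nth (T : Type) (x0 : T) (s : seq T) n : n < size s -> List.In (nth x0 s n) s.
Proof. by elim: s n => [//|y s IH] [|n] /= ns; [left|right; apply: IH]. Qed.

Lemma In_nth_inv (T : Type) (s : seq T) x :
  List.In x s -> exists2 n, n < size s & nth x s n = x.
Proof.
by elim: s => [//|y s IH] /= [->|/IH [n ns xn]]; [exists 0|exists n.+1].
Qed.

Section Normalization.
Variables (Sigma : finType) (k : nat) (G : dcfg Sigma).
Hypotheses (kG : is_kdcfg k G) (linG : linear_dcfg G).
Local Notation N := (nt G).
Local Notation rk := (@nrk Sigma G).
Local Notation P := (rules G).
Local Notation tok := (tok Sigma).
Local Notation tup := (tup Sigma).

Definition rule (i : 'I_(size P)) := tnth (in_tuple P) i.
Definition rule_nt i := nt_of (rule i).2.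

Definition next_tmpl (T : seq tok) := if next_move T is Peel _ T' then T' else T.
Definition stopped (T : seq tok) := if next_move T is Stop then true else false.

Definition chain i s := iter s next_tmpl (template rk (rule i).2).
Definition chain_bound := (\max_(i < size P) tmpl_weight (chain i 0)).+1.

(* [inr (i, s)] derives the values of the [s]-th template of the peeling chain
   of rule [i]; [chain_bound] exceeds the length of every chain, since each
   peeling step decreases the weight of the template. *)
Definition normal_nt : finType := (N + 'I_(size P) * 'I_chain_bound.+1)%type.

(* A stopped template is the bare hole sequence of the rule's nonterminal,
   which then stands for it. *)
Definition chain_nt i s : normal_nt :=
  if stopped (chain i s) then
    if rule_nt i is Some B then inl B else inr (i, inord s)
  else inr (i, inord s).

Definition chain_rhs i s : term Sigma normal_nt :=
  match next_move (chain i s) with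
  | Emit u => Tup u
  | Peel o _ => piece_term o (NT (chain_nt i s.+1))
  | Stop => Tup teps (* unused: stopped templates get no rule *)
  end.

Definition unit_rule i := stopped (chain i 0).

Definition unit_edge : rel N := fun A C =>
  has (fun i => [&& (rule i).1 == A, unit_rule i & rule_nt i == Some C]) (enum 'I_(size P)).

Definition normal_rk (X : normal_nt) : nat :=
  match X with inl A => rk A | inr (i, s) => nsep (chain i s) end.

Definition start_rules : seq (normal_nt * term Sigma normal_nt) :=
  List.flat_map (fun A => List.flat_map (fun i =>
    if connect unit_edge A (rule i).1 && ~~ unit_rule i
    then [:: (inl A, chain_rhs i 0)] else [::]) (enum 'I_(size P))) (enum N).

Definition chain_rules : seq (normal_nt * term Sigma normal_nt) :=
  List.flat_map (fun i => List.flat_map (fun s : 'I_chain_bound.+1 =>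
    if (0 < s < chain_bound) && ~~ stopped (chain i s)
    then [:: (inr (i, s), chain_rhs i s)] else [::]) (enum 'I_chain_bound.+1))
    (enum 'I_(size P)).

Definition normal_rules := start_rules ++ chain_rules.
Definition normal_dcfg : dcfg Sigma :=
  @Dcfg Sigma normal_nt normal_rk normal_rules (inl (start G)).

Lemma rule_in i : List.In (rule i) P.
Proof. by rewrite /rule (tnth_nth (rule i)); apply: In_nth. Qed.

Lemma rule_of_In r : List.In r P -> exists i, rule i = r.
Proof.
move=> rP; have [n nP rn] := In_nth_inv rP.
by exists (Ordinal nP); rewrite /rule (tnth_nth r).
Qed.

Lemma rule_wf i :
  [/\ correct rk k (rule i).2, rank rk (rule i).2 = rk (rule i).1 & nnt (rule i).2 <= 1].
Proof.
by have [_ /(_ _ (rule_in i)) [? ? _]] := kG; split=> //; apply: linG (rule_in i).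
Qed.

Lemma chainS i s : chain i s.+1 = next_tmpl (chain i s).
Proof. exact: iterS. Qed.

Lemma chain_inv i s : nhole (chain i s) = nholes rk (rule_nt i) /\ nsep (chain i s) <= k.
Proof.
have [c r lin] := rule_wf i; elim: s => [|s [IH1 IH2]].
  by rewrite /chain /= (template_nhole c) // (template_nsep c) r -r correct_rank.
rewrite chainS /next_tmpl; case E: next_move => [u|o T'|] //.
have pT := next_move_peel E; rewrite (peel_nhole pT); split=> //.
have [|] := peel_nsep pT; first lia.
move: IH1; rewrite /rule_nt; case E': (nt_of _) => [B|] /= -> // ltT'.
by have := rk_nt_of c E'; lia.
Qed.

Lemma stopped_chain i s :
  stopped (chain i s) -> exists2 B, rule_nt i = Some B & chain i s = holes Sigma (rk B).
Proof.
rewrite /stopped; case E: next_move => // _; have T_holes := next_move_stop E.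
have [+ _] := chain_inv i s; rewrite {1}T_holes nhole_holes.
by case: (rule_nt i) => [B|] //= [rkB]; exists B; rewrite // T_holes rkB.
Qed.

Lemma weight_chain_bound i : tmpl_weight (chain i 0) < chain_bound.
Proof. by rewrite ltnS; apply: (leq_bigmax_cond (F := fun i => tmpl_weight (chain i 0))). Qed.

Lemma gen_size A w : gen P A w -> size w = (rk A).+1.
Proof.
case=> n; elim: n A w => [//|n IH] A w /= [b Ab bw].
have [_ /(_ _ Ab) [cb rb _]] := kG.
by rewrite (sem_size IH cb bw) rb.
Qed.

Lemma gen_rule_tmpl_sem i w :
  tmpl_sem rk (gen P) (rule_nt i) (chain i 0) w -> gen P (rule i).1 w.
Proof.
have [c _ lin] := rule_wf i; move=> /(sem_template gen_size c lin) bw.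
by apply: gen_rule bw; rewrite -surjective_pairing; apply: rule_in.
Qed.

Definition orig_sem (X : normal_nt) (w : tup) : Prop :=
  match X with
  | inl A => gen P A w
  | inr (i, s) => tmpl_sem rk (gen P) (rule_nt i) (chain i s) w
  end.

Lemma chain_rhs_sound (g : normal_nt -> tup -> Prop) i s w :
  (forall Y y, g Y y -> orig_sem Y y) -> ~~ stopped (chain i s) -> s < chain_bound ->
  sem g (chain_rhs i s) w -> tmpl_sem rk (gen P) (rule_nt i) (chain i s) w.
Proof.
move=> g_orig; rewrite /chain_rhs /stopped; case E: next_move => [u|o T'|] // _ s_lt.
  have [-> T0 _] := next_move_emit E; move=> /= ->.
  have [+ _] := chain_inv i s; rewrite T0; case: (rule_nt i) => [B|] //= _.
  by apply/tmpl_sem_ground.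
have pT := next_move_peel E; have chainS_T' : chain i s.+1 = T' by rewrite chainS /next_tmpl E.
move/sem_piece_term=> [y /g_orig + ->]; rewrite (tmpl_sem_map rk (gen P) _ (peel_op pT)).
rewrite /chain_nt; case: ifP => [/stopped_chain [B EB chain_holes]|_] /=.
  rewrite EB => gy; exists y => //; rewrite -chainS_T' chain_holes.
  by exists y; [split; last exact: gen_size|rewrite decode_fill_holes // (gen_size gy)].
by rewrite inordK // -chainS_T' => ty; exists y.
Qed.

Lemma unit_edgeP A C : unit_edge A C ->
  exists2 i, (rule i).1 = A & rule_nt i = Some C /\ chain i 0 = holes Sigma (rk C).
Proof.
case/hasP=> i _ /and3P [/eqP <- /stopped_chain [B EB chain_holes] /eqP EC].
by exists i => //; move: EB chain_holes; rewrite EC => -[->].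
Qed.

Lemma unit_edge_gen A C w : unit_edge A C -> gen P C w -> gen P A w.
Proof.
case/unit_edgeP=> i <- [EC chain_holes] gw; apply: gen_rule_tmpl_sem.
by rewrite EC chain_holes; apply/tmpl_sem_holes => // ? /gen_size.
Qed.

Lemma connect_gen A C w : connect unit_edge A C -> gen P C w -> gen P A w.
Proof.
case/connectP=> p + ->; elim: p A => [//|D p IH] A /= /andP [AD pD] gw.
by apply: unit_edge_gen AD _; apply: IH.
Qed.

Lemma normal_rulesP X b : List.In (X, b) normal_rules ->
  (exists A i, [/\ X = inl A, b = chain_rhs i 0, connect unit_edge A (rule i).1
                 & ~~ unit_rule i]) \/
  (exists i (s : 'I_chain_bound.+1),
     [/\ X = inr (i, s), b = chain_rhs i s, 0 < s < chain_bound & ~~ stopped (chain i s)]).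
Proof.
rewrite /normal_rules List.in_app_iff => -[].
- move/List.in_flat_map=> [A [_ /List.in_flat_map [i [_]]]].
  by case: ifP => [/andP [Ai ui] [[<- <-]|//]|//]; left; exists A, i.
- move/List.in_flat_map=> [i [_ /List.in_flat_map [s [_]]]].
  by case: ifP => [/andP [si ni] [[<- <-]|//]|//]; right; exists i, s.
Qed.

Lemma normal_rules_sound n X w : gen_upto normal_rules n X w -> orig_sem X w.
Proof.
elim: n X w => [//|n IH] X w /= [b /normal_rulesP [[A [i [-> -> Ai ui]]]|]];
  last by case=> i [s [-> -> /andP [_ s_lt] ns]]; apply: chain_rhs_sound.
by move/(chain_rhs_sound IH ui (ltn0Sn _)) => /gen_rule_tmpl_sem; apply: connect_gen Ai.
Qed.

Local Notation new_tmpl_sem i s :=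
  (tmpl_sem rk (fun B => gen normal_rules (inl B)) (rule_nt i) (chain i s)).

Lemma start_rule_in A i : connect unit_edge A (rule i).1 -> ~~ unit_rule i ->
  List.In (inl A, chain_rhs i 0) normal_rules.
Proof.
move=> Ai ui; apply/List.in_or_app; left.
apply/List.in_flat_map; exists A; split; first by apply/In_mem; rewrite mem_enum.
apply/List.in_flat_map; exists i; split; first by apply/In_mem; rewrite mem_enum.
by rewrite Ai ui; left.
Qed.

Lemma chain_rule_in i (s : 'I_chain_bound.+1) : 0 < s < chain_bound ->
  ~~ stopped (chain i s) -> List.In (inr (i, s), chain_rhs i s) normal_rules.
Proof.
move=> s_in ns; apply/List.in_or_app; right.
apply/List.in_flat_map; exists i; split; first by apply/In_mem; rewrite mem_enum.
apply/List.in_flat_map; exists s; split; first by apply/In_mem; rewrite mem_enum.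
by rewrite s_in ns; left.
Qed.

Lemma chain_rhs_complete i s w : ~~ stopped (chain i s) ->
  (forall o T', next_move (chain i s) = Peel o T' ->
     forall y, new_tmpl_sem i s.+1 y -> gen normal_rules (chain_nt i s.+1) y) ->
  new_tmpl_sem i s w -> sem (gen normal_rules) (chain_rhs i s) w.
Proof.
rewrite /chain_rhs /stopped; case E: next_move => [u|o T'|] // _ next_gen.
  by have [-> T0 _] := next_move_emit E; case=> x _ ->; rewrite /= fill_holefree.
have pT := next_move_peel E; have chainS_T' : chain i s.+1 = T' by rewrite chainS /next_tmpl E.
move/(tmpl_sem_map _ _ _ (peel_op pT))=> [y ty ->]; apply/sem_piece_term; exists y => //.
by apply: (next_gen _ _ erefl); rewrite chainS_T'.
Qed.

Lemma chain_complete i s w : 0 < s -> s + tmpl_weight (chain i s) <= tmpl_weight (chain i 0) ->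
  new_tmpl_sem i s w -> gen normal_rules (chain_nt i s) w.
Proof.
move: {2}(tmpl_weight _) (erefl (tmpl_weight (chain i s))) => d.
elim/ltn_ind: d s w => d IH s w Ed s0 s_weight.
rewrite /chain_nt; case: ifP => [/stopped_chain [B EB chain_holes]|ns].
  by rewrite EB chain_holes => -[x [gx sx] ->]; rewrite decode_fill_holes.
have s_lt : s < chain_bound by have := weight_chain_bound i; lia.
move=> tw; apply: gen_rule (chain_rule_in (s := inord s) _ _) _; rewrite inordK //; try lia.
apply: chain_rhs_complete tw; first by rewrite ns.
move=> o T' E y; have /peel_weight lt_weight := next_move_peel E.
have chainS_T' : chain i s.+1 = T' by rewrite chainS /next_tmpl E.
by apply: (IH (tmpl_weight T')); rewrite ?chainS_T' //; lia.
Qed.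

Lemma unit_edge_normal_gen A C w :
  unit_edge A C -> gen normal_rules (inl C) w -> gen normal_rules (inl A) w.
Proof.
move=> AC [[|n] //= [b /normal_rulesP [[A0 [i [[<-] -> Ci ui]]]|[? [? []]]] //] bw].
exists n.+1, (chain_rhs i 0) => //; apply: start_rule_in ui.
exact: connect_trans (connect1 AC) Ci.
Qed.

Lemma normal_rules_complete n A w : gen_upto P n A w -> gen normal_rules (inl A) w.
Proof.
elim: n A w => [//|n IH] A w /= [b /rule_of_In [i Ei] bw].
have [c _ lin] := rule_wf i; rewrite Ei /= in c lin.
have g_size C x : gen_upto P n C x -> size x = (rk C).+1.
  by move=> gx; apply: gen_size; exists n.
have /(tmpl_sem_mono IH) tw : tmpl_sem rk (gen_upto P n) (rule_nt i) (chain i 0) w.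
  by rewrite /rule_nt /chain Ei; apply/(sem_template g_size c lin).
case U: (unit_rule i).
  have [B EB chain_holes] := stopped_chain U.
  move: tw; rewrite EB chain_holes => -[x [gx sx] ->]; rewrite decode_fill_holes //.
  apply: unit_edge_normal_gen gx; apply/hasP; exists i; first by rewrite mem_enum.
  by rewrite Ei U EB /= !eqxx.
apply: gen_rule (start_rule_in (i := i) _ _) _; [by rewrite Ei connect0|by rewrite U|].
apply: chain_rhs_complete tw; first by move: U; rewrite /unit_rule => ->.
move=> o T' E y; apply: chain_complete => //.
have /peel_weight := next_move_peel E.
by rewrite chainS /next_tmpl E.
Qed.

Lemma rk_connect A C : connect unit_edge A C -> rk A = rk C.
Proof.
case/connectP=> p + ->; elim: p A => [//|D p IH] A /= /andP [AD /IH <-].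
have [i <- [EC chain_holes]] := unit_edgeP AD.
have [c <- _] := rule_wf i; rewrite -(template_nsep c).
by change (template rk _) with (chain i 0); rewrite chain_holes nsep_holes.
Qed.

Lemma normal_rk_chain_nt i s :
  s < chain_bound.+1 -> normal_rk (chain_nt i s) = nsep (chain i s).
Proof.
rewrite /chain_nt; case: ifP => [/stopped_chain [B -> ->] _|_ s_lt] /=.
  by rewrite nsep_holes.
by rewrite inordK.
Qed.

Lemma chain_rhs_wf i s X : ~~ stopped (chain i s) -> s < chain_bound ->
  normal_rk X = nsep (chain i s) -> wf_normal_rule normal_rk k (X, chain_rhs i s).
Proof.
move=> ns s_lt XT; have [_ Tk] := chain_inv i s.
move: ns; rewrite /chain_rhs /stopped; case E: next_move => [u|o T'|] // _.
  by have [-> T0 T1] := next_move_emit E; apply: emit_rule_wf.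
have pT := next_move_peel E; have chainS_T' : chain i s.+1 = T' by rewrite chainS /next_tmpl E.
have [_ T'k] := chain_inv i s.+1.
by apply: piece_rule_wf pT _ _ XT _ => //; rewrite -chainS_T' // normal_rk_chain_nt.
Qed.

Lemma normal_rules_wf r : List.In r normal_rules -> wf_normal_rule normal_rk k r.
Proof.
case: r => X b /normal_rulesP [[A [i [-> -> Ai ui]]]|[i [s [-> -> /andP [_ s_lt] ns]]]].
  apply: chain_rhs_wf => //; rewrite /= (rk_connect Ai).
  by have [c <- _] := rule_wf i; rewrite (template_nsep c).
exact: chain_rhs_wf.
Qed.

End Normalization.

Theorem lemma1 (Sigma : finType) (k : nat) (G : dcfg Sigma) :
  is_kdcfg k G -> linear_dcfg G ->
  exists G' : dcfg Sigma,
    [/\ is_kdcfg k G',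
        (forall w, language G w <-> language G' w)
      & forall r, List.In r (rules G') -> normal_rule r].
Proof.
move=> kG linG; exists (normal_dcfg G); split.
- split=> [|r /(normal_rules_wf kG linG) [] //]; first by case: kG.
- move=> w; rewrite /language !language_gen; split.
  + by case=> n /(normal_rules_complete kG linG).
  + by case=> n /(normal_rules_sound kG linG).
- by move=> r /(normal_rules_wf kG linG) [].
Qed.
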